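(* Let $A$ and $G$ be selfadjoint operators in the Hilbert space $\mathcal H$. If $AG$ is bounded and everywhere defined, or $GA$ is bounded and everywhere defined, then either both $A$ and $G$ are bounded and everywhere defined, or the condition ''$\rho(AG)\neq\emptyset$ and $\rho(GA)\neq\emptyset$'' fails.
   Context: $(\mathcal H,(\cdot,\cdot))$ is a complex Hilbert space; $A,G$ are possibly unbounded selfadjoint operators; $AG$, $GA$ are the operator products with natural domains. For a linear operator $S$, $\rho(S)$ is the set of $\lambda\in\mathbb C$ such that $S-\lambda$ is injective, surjective and has a bounded everywhere defined inverse. *)

(* Unbounded operators are
   given by a domain predicate and a (total) function, only meaningful on
   the domain. *)
From Stdlib Require Import Reals.
Open Scope R_scope.

Record C := mkC { Re : R; Im : R }.
Definition C0 : C := mkC 0 0.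
Definition C1 : C := mkC 1 0.
Definition Cadd (a b : C) : C := mkC (Re a + Re b) (Im a + Im b).
Definition Cmul (a b : C) : C :=
  mkC (Re a * Re b - Im a * Im b) (Re a * Im b + Im a * Re b).
Definition Cconj (a : C) : C := mkC (Re a) (- Im a).

Record HilbertSpace := {
  hcar :> Type;
  hadd : hcar -> hcar -> hcar;
  hzero : hcar;
  hopp : hcar -> hcar;
  hscal : C -> hcar -> hcar;
  hinner : hcar -> hcar -> C;
  hadd_assoc : forall x y z, hadd x (hadd y z) = hadd (hadd x y) z;
  hadd_comm : forall x y, hadd x y = hadd y x;
  hadd_0 : forall x, hadd x hzero = x;
  hadd_opp : forall x, hadd x (hopp x) = hzero;
  hscal_1 : forall x, hscal C1 x = x;
  hscal_assoc : forall a b x, hscal a (hscal b x) = hscal (Cmul a b) x;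
  hscal_addv : forall a x y, hscal a (hadd x y) = hadd (hscal a x) (hscal a y);
  hscal_adds : forall a b x, hscal (Cadd a b) x = hadd (hscal a x) (hscal b x);
  hinner_add : forall x y z, hinner (hadd x y) z = Cadd (hinner x z) (hinner y z);
  hinner_scal : forall a x y, hinner (hscal a x) y = Cmul a (hinner x y);
  hinner_sym : forall x y, hinner y x = Cconj (hinner x y);
  hinner_pos : forall x, 0 <= Re (hinner x x);
  hinner_def : forall x, hinner x x = C0 -> x = hzero;
  hcomplete : forall u : nat -> hcar,
    (forall eps, 0 < eps -> exists N, forall m n, (N <= m)%nat -> (N <= n)%nat ->
       sqrt (Re (hinner (hadd (u m) (hopp (u n))) (hadd (u m) (hopp (u n))))) < eps) ->
    exists l, forall eps, 0 < eps -> exists N, forall n, (N <= n)%nat ->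
       sqrt (Re (hinner (hadd (u n) (hopp l)) (hadd (u n) (hopp l)))) < eps
}.

Arguments hadd {_}. Arguments hzero {_}. Arguments hopp {_}.
Arguments hscal {_}. Arguments hinner {_}.

Definition hsub {H : HilbertSpace} (x y : H) : H := hadd x (hopp y).
Definition hnorm {H : HilbertSpace} (x : H) : R := sqrt (Re (hinner x x)).

Record Op (H : HilbertSpace) := { dom : H -> Prop; app : H -> H }.
Arguments dom {_}. Arguments app {_}.

Definition is_linear {H : HilbertSpace} (T : Op H) : Prop :=
  dom T hzero /\
  (forall x y, dom T x -> dom T y -> dom T (hadd x y)) /\
  (forall a x, dom T x -> dom T (hscal a x)) /\
  (forall x y, dom T x -> dom T y -> app T (hadd x y) = hadd (app T x) (app T y)) /\
  (forall a x, dom T x -> app T (hscal a x) = hscal a (app T x)).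

Definition densely_defined {H : HilbertSpace} (T : Op H) : Prop :=
  forall x eps, 0 < eps -> exists y, dom T y /\ hnorm (hsub x y) < eps.

(* T = T^* : T densely defined linear, and the graph of T^*,
   {(y,z) | forall x in dom T, <T x, y> = <x, z>}, equals the graph of T. *)
Definition selfadjoint {H : HilbertSpace} (T : Op H) : Prop :=
  is_linear T /\ densely_defined T /\
  forall y z : H,
    (forall x, dom T x -> hinner (app T x) y = hinner x z) <->
    (dom T y /\ z = app T y).

Definition op_comp {H : HilbertSpace} (S T : Op H) : Op H :=
  {| dom := fun x => dom T x /\ dom S (app T x); app := fun x => app S (app T x) |}.

Definition everywhere_defined {H : HilbertSpace} (T : Op H) : Prop :=
  forall x, dom T x.

Definition bounded {H : HilbertSpace} (T : Op H) : Prop :=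
  exists M : R, forall x, dom T x -> hnorm (app T x) <= M * hnorm x.

Definition bounded_everywhere_defined {H : HilbertSpace} (T : Op H) : Prop :=
  everywhere_defined T /\ bounded T.

Definition op_shift {H : HilbertSpace} (T : Op H) (l : C) : Op H :=
  {| dom := dom T; app := fun x => hsub (app T x) (hscal l x) |}.

Definition in_resolvent {H : HilbertSpace} (T : Op H) (l : C) : Prop :=
  let S := op_shift T l in
  (forall x y, dom S x -> dom S y -> app S x = app S y -> x = y) /\
  (forall y, exists x, dom S x /\ app S x = y) /\
  exists Rinv : Op H,
    bounded_everywhere_defined Rinv /\
    (forall y, dom S (app Rinv y) /\ app S (app Rinv y) = y) /\
    (forall x, dom S x -> app Rinv (app S x) = x).

Definition resolvent_nonempty {H : HilbertSpace} (T : Op H) : Prop :=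
  exists l : C, in_resolvent T l.

(* If rho(GA) is nonempty, both A and G are
   bounded and everywhere defined; hence the disjunction of the theorem.

   - dom(AG) is contained in dom G, so G is everywhere defined.
   - For lambda in rho(GA), every y is y = GAx - lambda x with x in dom A;
     since AG is everywhere defined, GAx lies in dom A, so y does too: A is
     everywhere defined.
   - Hellinger-Toeplitz: a symmetric everywhere defined operator is bounded.
     We prove it with a gliding hump: for any sequence w_k of nonzero vectors,
     completeness yields one vector l with |Re <l, w_k>| >= 3^-k |w_k| / 2
     for every k.  If T were unbounded, choosing |T y_n| > 2 n 3^n |y_n| and
     w_n = T y_n gives n |y_n| < |Re <T l, y_n>| <= |T l| |y_n| for all n,
     contradicting the Archimedean property. *)

From Pilot Require Import Defs.
From Stdlib Require Import Reals Lra Lia Classical ClassicalEpsilon.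
Open Scope R_scope.

Lemma hadd_0l {H : HilbertSpace} (x : H) : hadd hzero x = x.
Proof. rewrite hadd_comm. apply hadd_0. Qed.

Lemma hadd_idem_zero {H : HilbertSpace} (a : H) : hadd a a = a -> a = hzero.
Proof.
  intro E. rewrite <- (hadd_opp _ a). rewrite <- E at 2.
  rewrite <- hadd_assoc, hadd_opp, hadd_0. reflexivity.
Qed.

Lemma hopp_unique {H : HilbertSpace} (a b : H) : hadd a b = hzero -> b = hopp a.
Proof.
  intro E. rewrite <- (hadd_0 _ b), <- (hadd_opp _ a), hadd_assoc,
    (hadd_comm _ b a), E, hadd_0l.
  reflexivity.
Qed.

Lemma hsub_self {H : HilbertSpace} (a : H) : hsub a a = hzero.
Proof. apply hadd_opp. Qed.

Lemma hsub_chain {H : HilbertSpace} (a b c : H) :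
  hsub a c = hadd (hsub a b) (hsub b c).
Proof.
  unfold hsub. rewrite <- hadd_assoc, (hadd_assoc _ (hopp b) b),
    (hadd_comm _ (hopp b) b), hadd_opp, hadd_0l.
  reflexivity.
Qed.

Lemma hopp_hsub {H : HilbertSpace} (a b : H) : hopp (hsub a b) = hsub b a.
Proof.
  symmetry. apply hopp_unique. rewrite <- hsub_chain. apply hsub_self.
Qed.

Lemma hscal_0 {H : HilbertSpace} (v : H) : hscal C0 v = hzero.
Proof.
  apply hadd_idem_zero. rewrite <- hscal_adds. unfold Cadd, C0. simpl.
  rewrite Rplus_0_r. reflexivity.
Qed.

Definition rc (c : R) : Defs.C := mkC c 0.

Lemma hopp_as_scal {H : HilbertSpace} (v : H) : hopp v = hscal (rc (-1)) v.
Proof.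
  symmetry. apply hopp_unique. rewrite <- (hscal_1 _ v) at 1.
  rewrite <- hscal_adds. unfold Cadd, C1, rc, C0. simpl.
  replace (1 + -1) with 0 by ring. rewrite Rplus_0_r. apply hscal_0.
Qed.

(* The real part of the inner product: a real inner product on H whose norm
   is hnorm.  All estimates below only need this real structure. *)
Definition ip {H : HilbertSpace} (x y : H) : R := Re (hinner x y).

Lemma ip_add_l {H : HilbertSpace} (x y z : H) : ip (hadd x y) z = ip x z + ip y z.
Proof. unfold ip. rewrite hinner_add. reflexivity. Qed.

Lemma ip_sym {H : HilbertSpace} (x y : H) : ip y x = ip x y.
Proof. unfold ip. rewrite hinner_sym. reflexivity. Qed.

Lemma ip_add_r {H : HilbertSpace} (x y z : H) : ip z (hadd x y) = ip z x + ip z y.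
Proof. rewrite <- !(ip_sym z). apply ip_add_l. Qed.

Lemma ip_scal_l {H : HilbertSpace} (c : R) (x y : H) :
  ip (hscal (rc c) x) y = c * ip x y.
Proof. unfold ip. rewrite hinner_scal. simpl. ring. Qed.

Lemma ip_scal_r {H : HilbertSpace} (c : R) (x y : H) :
  ip y (hscal (rc c) x) = c * ip y x.
Proof. rewrite <- !(ip_sym y). apply ip_scal_l. Qed.

Lemma ip_opp_l {H : HilbertSpace} (x z : H) : ip (hopp x) z = - ip x z.
Proof. rewrite hopp_as_scal, ip_scal_l. ring. Qed.

Lemma ip_sub_l {H : HilbertSpace} (x y z : H) : ip (hsub x y) z = ip x z - ip y z.
Proof. unfold hsub. rewrite ip_add_l, ip_opp_l. ring. Qed.

Lemma ip_zero_r {H : HilbertSpace} (z : H) : ip z hzero = 0.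
Proof. rewrite <- (hsub_self z), ip_sym, ip_sub_l. ring. Qed.

Lemma ip_pos {H : HilbertSpace} (x : H) : 0 <= ip x x.
Proof. apply hinner_pos. Qed.

(* <x,x> is real, so a vanishing real part forces x = 0. *)
Lemma ip_def {H : HilbertSpace} (x : H) : ip x x = 0 -> x = hzero.
Proof.
  intro E. apply hinner_def. unfold ip in E.
  pose proof (hinner_sym _ x x) as S.
  destruct (hinner x x) as [a b]. simpl in *. unfold Cconj in S. simpl in S.
  injection S. intro Hb. unfold C0. f_equal; lra.
Qed.

Lemma hnorm_pos {H : HilbertSpace} (x : H) : 0 <= hnorm x.
Proof. apply sqrt_pos. Qed.

Lemma hnorm_sq {H : HilbertSpace} (x : H) : hnorm x * hnorm x = ip x x.
Proof. apply sqrt_sqrt, ip_pos. Qed.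

Lemma hnorm_zero {H : HilbertSpace} : hnorm (@hzero H) = 0.
Proof.
  unfold hnorm. fold (@ip H hzero hzero). rewrite ip_zero_r. apply sqrt_0.
Qed.

Lemma cauchy_schwarz_sq {H : HilbertSpace} (x y : H) :
  ip x y * ip x y <= ip x x * ip y y.
Proof.
  destruct (Req_dec (ip y y) 0) as [E|E].
  - apply ip_def in E. subst y. rewrite !ip_zero_r. pose proof (ip_pos x). nra.
  - pose proof (ip_pos y) as Py.
    (* expand 0 <= |x + t y|^2 at the minimising t *)
    set (t := - ip x y / ip y y).
    pose proof (ip_pos (hadd x (hscal (rc t) y))) as P.
    rewrite !ip_add_l, !ip_add_r, !ip_scal_l, !ip_scal_r, (ip_sym x y) in P.
    replace (ip x x + t * ip x y + (t * ip x y + t * (t * ip y y)))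
      with ((ip x x * ip y y - ip x y * ip x y) / ip y y) in P
      by (unfold t; field; exact E).
    assert (0 < ip y y) by lra.
    apply Rmult_le_compat_r with (r := ip y y) in P; [|lra].
    unfold Rdiv in P. rewrite Rmult_assoc, Rinv_l in P by exact E. lra.
Qed.

Lemma cauchy_schwarz {H : HilbertSpace} (x y : H) :
  Rabs (ip x y) <= hnorm x * hnorm y.
Proof.
  pose proof (cauchy_schwarz_sq x y) as C. rewrite <- !hnorm_sq in C.
  pose proof (hnorm_pos x). pose proof (hnorm_pos y).
  assert (0 <= hnorm x * hnorm y) by (apply Rmult_le_pos; auto).
  apply Rabs_le; split; nra.
Qed.

Lemma hnorm_triangle {H : HilbertSpace} (x y : H) :
  hnorm (hadd x y) <= hnorm x + hnorm y.
Proof.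
  pose proof (cauchy_schwarz x y). pose proof (Rle_abs (ip x y)).
  pose proof (hnorm_pos x). pose proof (hnorm_pos y). pose proof (hnorm_pos (hadd x y)).
  pose proof (hnorm_sq (hadd x y)) as E.
  rewrite ip_add_l, !ip_add_r, (ip_sym x y), <- (hnorm_sq x), <- (hnorm_sq y) in E.
  nra.
Qed.

Lemma hnorm_scal {H : HilbertSpace} (c : R) (x : H) :
  hnorm (hscal (rc c) x) = Rabs c * hnorm x.
Proof.
  unfold hnorm. fold (ip (hscal (rc c) x) (hscal (rc c) x)). fold (ip x x).
  rewrite ip_scal_l, ip_scal_r, <- Rmult_assoc, sqrt_mult_alt.
  - f_equal. rewrite <- Rsqr_def. apply sqrt_Rsqr_abs.
  - pose proof (Rle_0_sqr c). unfold Rsqr in *. lra.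
Qed.

Lemma hnorm_opp {H : HilbertSpace} (x : H) : hnorm (hopp x) = hnorm x.
Proof. rewrite hopp_as_scal, hnorm_scal, Rabs_left by lra. ring. Qed.

Lemma hdist_sym {H : HilbertSpace} (a b : H) : hnorm (hsub a b) = hnorm (hsub b a).
Proof. rewrite <- hopp_hsub, hnorm_opp. reflexivity. Qed.

Lemma hdist_triangle {H : HilbertSpace} (a b c : H) :
  hnorm (hsub a c) <= hnorm (hsub a b) + hnorm (hsub b c).
Proof. rewrite (hsub_chain a b c). apply hnorm_triangle. Qed.

Definition r3 (n : nat) : R := (/3) ^ n.

Lemma r3_pos n : 0 < r3 n.
Proof. apply pow_lt. lra. Qed.

Lemma r3_S n : r3 (S n) = r3 n / 3.
Proof. unfold r3. simpl. field. Qed.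

Lemma r3_antitone m n : (m <= n)%nat -> r3 n <= r3 m.
Proof. induction 1; [lra|]. rewrite r3_S. pose proof (r3_pos m0). lra. Qed.

Lemma r3_small eps : 0 < eps -> exists N, r3 N < eps.
Proof.
  intro Heps. destruct (pow_lt_1_zero (/3) ltac:(rewrite Rabs_right; lra) eps Heps)
    as [N HN].
  exists N. pose proof (HN N (le_n N)) as Q. unfold r3.
  rewrite Rabs_right in Q; [lra|]. apply Rle_ge, pow_le. lra.
Qed.

Definition sgn (a : R) : R := if Rle_dec 0 a then 1 else -1.

Lemma sgn_abs a : Rabs (sgn a) = 1.
Proof. unfold sgn. destruct Rle_dec; [apply Rabs_R1|]. rewrite Rabs_left; lra. Qed.

(* Gliding hump sequence: x_0 = 0 and x_(k+1) = x_k + 3^-k w_k / |w_k|, with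
   the sign chosen so that the new term does not cancel <x_k, w_k>. *)
Fixpoint hump_seq {H : HilbertSpace} (w : nat -> H) (n : nat) : H :=
  match n with
  | O => hzero
  | S k => hadd (hump_seq w k)
      (hscal (rc (sgn (ip (hump_seq w k) (w k)) * (r3 k / hnorm (w k)))) (w k))
  end.

Section GlidingHump.

Variable H : HilbertSpace.
Variable w : nat -> H.
Hypothesis w_nonzero : forall k, 0 < hnorm (w k).

Lemma hump_step_norm k : hnorm (hsub (hump_seq w (S k)) (hump_seq w k)) = r3 k.
Proof.
  unfold hsub. simpl.
  rewrite (hadd_comm _ (hump_seq w k)), <- hadd_assoc, hadd_opp, hadd_0.
  rewrite hnorm_scal, Rabs_mult, sgn_abs, Rabs_right.
  - pose proof (w_nonzero k). field. lra.
  - pose proof (r3_pos k). pose proof (w_nonzero k).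
    apply Rle_ge, Rlt_le, Rdiv_lt_0_compat; lra.
Qed.

Lemma hump_step_gain k :
  r3 k * hnorm (w k) <= Rabs (ip (hump_seq w (S k)) (w k)).
Proof.
  simpl. rewrite ip_add_l, ip_scal_l, <- hnorm_sq.
  pose proof (r3_pos k). pose proof (w_nonzero k).
  replace (sgn (ip (hump_seq w k) (w k)) * (r3 k / hnorm (w k))
             * (hnorm (w k) * hnorm (w k)))
    with (sgn (ip (hump_seq w k) (w k)) * (r3 k * hnorm (w k))) by (field; lra).
  assert (0 < r3 k * hnorm (w k)) by (apply Rmult_lt_0_compat; lra).
  unfold sgn. destruct Rle_dec.
  - rewrite Rabs_right; lra.
  - rewrite Rabs_left; lra.
Qed.

Lemma hump_seq_increments n m : (n <= m)%nat ->
  hnorm (hsub (hump_seq w m) (hump_seq w n)) <= 3/2 * (r3 n - r3 m).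
Proof.
  induction 1 as [|m _ IH].
  - rewrite hsub_self, hnorm_zero. lra.
  - eapply Rle_trans; [apply (hdist_triangle _ (hump_seq w m))|].
    rewrite hump_step_norm, r3_S. lra.
Qed.

Lemma hump_seq_cauchy N n m : (N <= n)%nat -> (N <= m)%nat ->
  hnorm (hsub (hump_seq w m) (hump_seq w n)) <= 3/2 * r3 N.
Proof.
  intros HNn HNm. destruct (Nat.le_ge_cases n m) as [h|h].
  - pose proof (hump_seq_increments n m h). pose proof (r3_pos m).
    pose proof (r3_antitone N n HNn). lra.
  - rewrite hdist_sym. pose proof (hump_seq_increments m n h).
    pose proof (r3_pos n). pose proof (r3_antitone N m HNm). lra.
Qed.

Lemma hump_seq_limit :
  exists l, forall k, hnorm (hsub (hump_seq w k) l) <= 3/2 * r3 k.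
Proof.
  destruct (hcomplete H (hump_seq w)) as [l Hl].
  - intros eps Heps. destruct (r3_small (eps * 2 / 3)) as [N HN]; [lra|].
    exists N. intros m n Hm Hn.
    pose proof (hump_seq_cauchy N n m Hn Hm). unfold hnorm, hsub, ip in *. lra.
  - exists l. intro k.
    destruct (Rle_lt_dec (hnorm (hsub (hump_seq w k) l)) (3/2 * r3 k))
      as [h|h]; [exact h|exfalso].
    destruct (Hl (hnorm (hsub (hump_seq w k) l) - 3/2 * r3 k)) as [N HN]; [lra|].
    pose proof (HN (max N k) ltac:(lia)) as Far.
    pose proof (hdist_triangle (hump_seq w k) (hump_seq w (max N k)) l) as Tri.
    pose proof (hump_seq_cauchy k (max N k) k ltac:(lia) (le_n _)) as Near.
    unfold hnorm, hsub, ip in *. lra.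
Qed.

Theorem gliding_hump :
  exists l, forall k, r3 k * hnorm (w k) / 2 <= Rabs (ip l (w k)).
Proof.
  destruct hump_seq_limit as [l Hl]. exists l. intro k.
  pose proof (Hl (S k)) as Close. rewrite r3_S in Close.
  pose proof (hump_step_gain k) as Gain.
  pose proof (cauchy_schwarz (hsub (hump_seq w (S k)) l) (w k)) as CS.
  rewrite ip_sub_l in CS.
  pose proof (Rabs_triang_inv (ip (hump_seq w (S k)) (w k))
                (ip (hump_seq w (S k)) (w k) - ip l (w k))) as T.
  replace (ip (hump_seq w (S k)) (w k) - (ip (hump_seq w (S k)) (w k) - ip l (w k)))
    with (ip l (w k)) in T by ring.
  pose proof (w_nonzero k). pose proof (r3_pos k).
  assert (hnorm (hsub (hump_seq w (S k)) l) * hnorm (w k)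
            <= 3/2 * (r3 k / 3) * hnorm (w k)) by (apply Rmult_le_compat_r; lra).
  lra.
Qed.

End GlidingHump.

(* T is symmetric on all of H, in the real form that the gliding hump uses. *)
Definition symmetric_everywhere {H : HilbertSpace} (T : Op H) : Prop :=
  forall x y, ip (app T x) y = ip x (app T y).

Lemma unbounded_witness {H : HilbertSpace} (T : Op H) :
  ~ Defs.bounded T -> forall M, exists x, M * hnorm x < hnorm (app T x).
Proof.
  intros NB M. apply NNPP. intro NE. apply NB. exists M. intros x _.
  apply Rnot_lt_le. intro h. apply NE. exists x. exact h.
Qed.

Theorem hellinger_toeplitz {H : HilbertSpace} (T : Op H) :
  symmetric_everywhere T -> Defs.bounded T.
Proof.
  intro Sym. apply NNPP. intro NB.
  set (K := fun n : nat => 2 * INR n / r3 n).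
  destruct (choice _ (fun n => unbounded_witness T NB (K n))) as [y Hy].
  assert (Kpos : forall n, 0 <= K n).
  { intro n. unfold K. pose proof (r3_pos n). pose proof (pos_INR n).
    apply Rle_mult_inv_pos; lra. }
  assert (Ty_nonzero : forall n, 0 < hnorm (app T (y n))).
  { intro n. pose proof (Hy n).
    pose proof (Rmult_le_pos _ _ (Kpos n) (hnorm_pos (y n))). lra. }
  destruct (gliding_hump H (fun n => app T (y n)) Ty_nonzero) as [l Hl].
  destruct (INR_unbounded (hnorm (app T l))) as [n Hn].
  (* n |y_n| < 3^-n |T y_n| / 2 <= |<T l, y_n>| <= |T l| |y_n| *)
  assert (Upper : INR n * hnorm (y n) < hnorm (app T l) * hnorm (y n)).
  { pose proof (Hl n) as Hump. simpl in Hump. rewrite <- Sym in Hump.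
    pose proof (cauchy_schwarz (app T l) (y n)).
    pose proof (Hy n). pose proof (r3_pos n). pose proof (hnorm_pos (y n)).
    assert (r3 n * (K n * hnorm (y n)) / 2 = INR n * hnorm (y n))
      by (unfold K; field; lra).
    assert (r3 n * (K n * hnorm (y n)) < r3 n * hnorm (app T (y n)))
      by (apply Rmult_lt_compat_l; lra).
    lra. }
  assert (Ny : 0 < hnorm (y n)).
  { destruct (hnorm_pos (y n)) as [h|h]; [exact h|].
    rewrite <- h in Upper. lra. }
  apply Rmult_lt_reg_r in Upper; lra.
Qed.

Lemma selfadjoint_everywhere_symmetric {H : HilbertSpace} (T : Op H) :
  selfadjoint T -> everywhere_defined T -> symmetric_everywhere T.
Proof.
  intros [_ [_ SA]] ED x y. unfold ip. f_equal.
  apply (proj2 (SA y (app T y))); auto.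
Qed.

Corollary selfadjoint_everywhere_bounded {H : HilbertSpace} (T : Op H) :
  selfadjoint T -> everywhere_defined T -> bounded_everywhere_defined T.
Proof.
  intros SA ED. split; [exact ED|].
  apply hellinger_toeplitz, selfadjoint_everywhere_symmetric; assumption.
Qed.

(* If ST is everywhere defined and ran(TS - lambda) = H for a linear S,
   then S is everywhere defined: y = TSx - lambda x with TSx in dom S. *)
Lemma everywhere_defined_of_products {H : HilbertSpace} (S T : Op H) (l : Defs.C) :
  is_linear S -> everywhere_defined (op_comp S T) ->
  (forall y, exists x, dom (op_comp T S) x /\ app (op_shift (op_comp T S) l) x = y) ->
  everywhere_defined S.
Proof.
  intros [_ [Sadd [Sscal _]]] ED Surj y.
  destruct (Surj y) as [x [[Dx _] <-]]. simpl. unfold hsub.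
  apply Sadd.
  - apply (ED (app S x)).
  - rewrite hopp_as_scal. apply Sscal, Sscal, Dx.
Qed.

Lemma product_resolvent_bounded {H : HilbertSpace} (A G : Op H) :
  selfadjoint A -> selfadjoint G -> everywhere_defined (op_comp A G) ->
  resolvent_nonempty (op_comp G A) ->
  bounded_everywhere_defined A /\ bounded_everywhere_defined G.
Proof.
  intros SA SG ED [l [_ [Surj _]]].
  split; apply selfadjoint_everywhere_bounded; auto.
  - exact (everywhere_defined_of_products A G l (proj1 SA) ED Surj).
  - intro x. apply (ED x).
Qed.

Theorem mainTheorem4 (H : HilbertSpace) (A G : Op H) :
  selfadjoint A -> selfadjoint G ->
  (bounded_everywhere_defined (op_comp A G) \/
   bounded_everywhere_defined (op_comp G A)) ->
  (bounded_everywhere_defined A /\ bounded_everywhere_defined G) \/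
  ~ (resolvent_nonempty (op_comp A G) /\ resolvent_nonempty (op_comp G A)).
Proof.
  intros SA SG [[ED _]|[ED _]].
  - destruct (classic (resolvent_nonempty (op_comp G A))) as [R|R].
    + left. apply product_resolvent_bounded; assumption.
    + right. tauto.
  - destruct (classic (resolvent_nonempty (op_comp A G))) as [R|R].
    + left. apply and_comm, product_resolvent_bounded; assumption.
    + right. tauto.
Qed.
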